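(* Let $(X,d^\star)$ be a $\star$-metric space and $M\subseteq X$ a nonempty subset. Then $(M,d^\star|_{M\times M})$ is totally bounded if and only if $(\overline{M},d^\star|_{\overline{M}\times\overline{M}})$ is totally bounded, where $\overline{M}$ is the closure of $M$ in $(X,\mathscr{T}_{d^\star})$.
   Context: A $t$-definer is a function $\star:[0,\infty)\times[0,\infty)\to[0,\infty)$ such that for all $a,b,c\ge 0$: $a\star b=b\star a$; $a\star(b\star c)=(a\star b)\star c$; if $a\le b$ then $a\star c\le b\star c$; $a\star 0=a$; and $\star$ is continuous in its first variable with respect to the Euclidean topology. Given a nonempty set $X$ and a $t$-definer $\star$, a $\star$-metric on $X$ is a function $d^\star:X\times X\to[0,\infty)$ such that for all $x,y,z\in X$: $d^\star(x,y)=0$ iff $x=y$; $d^\star(x,y)=d^\star(y,x)$; and $d^\star(x,y)\le d^\star(x,z)\star d^\star(z,y)$; $(X,d^\star)$ is a $\star$-metric space. Put $B_{d^\star}(a,r)=\{x\in X: d^\star(a,x)<r\}$ and let $\mathscr{T}_{d^\star}$ be the topology consisting of all $U\subseteq X$ such that for each $a\in U$ some $B_{d^\star}(a,r)$, $r>0$, is contained in $U$. A $\star$-metric space $(Y,\rho)$ is totally bounded if for every $\epsilon>0$ there is a finite set $F\subseteq Y$ with $Y=\bigcup_{x\in F}\{y\in Y:\rho(x,y)<\epsilon\}$. *)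

From Stdlib Require Import Reals List.
Open Scope R_scope.

(* A t-definer: an operation on [0,oo). We model it as star : R -> R -> R,
   required to map [0,oo)x[0,oo) into [0,oo) and satisfy the axioms on [0,oo). *)
Definition t_definer (star : R -> R -> R) : Prop :=
  (forall a b, 0 <= a -> 0 <= b -> 0 <= star a b) /\
  (forall a b, 0 <= a -> 0 <= b -> star a b = star b a) /\
  (forall a b c, 0 <= a -> 0 <= b -> 0 <= c ->
     star a (star b c) = star (star a b) c) /\
  (forall a b c, 0 <= a -> 0 <= b -> 0 <= c -> a <= b -> star a c <= star b c) /\
  (forall a, 0 <= a -> star a 0 = a) /\
  (forall b a, 0 <= b -> 0 <= a ->
     forall eps, eps > 0 -> exists delta, delta > 0 /\
       forall x, 0 <= x -> Rabs (x - a) < delta -> Rabs (star x b - star a b) < eps).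

Definition star_metric {X : Type} (star : R -> R -> R) (d : X -> X -> R) : Prop :=
  (forall x y, 0 <= d x y) /\
  (forall x y, d x y = 0 <-> x = y) /\
  (forall x y, d x y = d y x) /\
  (forall x y z, d x y <= star (d x z) (d z y)).

Definition ball {X : Type} (d : X -> X -> R) (a : X) (r : R) : X -> Prop :=
  fun x => d a x < r.

Definition is_open {X : Type} (d : X -> X -> R) (U : X -> Prop) : Prop :=
  forall a, U a -> exists r, r > 0 /\ forall x, ball d a r x -> U x.

Definition closure {X : Type} (d : X -> X -> R) (M : X -> Prop) : X -> Prop :=
  fun x => forall U, is_open d U -> U x -> exists y, U y /\ M y.

Definition totally_bounded_sub {X : Type} (d : X -> X -> R) (M : X -> Prop) : Prop :=
  forall eps, eps > 0 -> exists F : list X,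
    (forall x, In x F -> M x) /\
    (forall y, M y -> exists x, In x F /\ d x y < eps).

(* Small distances combine to small distances: continuity of the t-definer at 0
   together with [star a 0 = a] gives, for every [eps > 0], a [delta > 0] with
   [star a b < eps] whenever [a, b < delta]. Hence balls are open, total
   boundedness passes to subsets, and a [delta]-net of [M] is an [eps]-net of
   its closure, since every point of the closure is [delta]-close to [M]. For
   the converse a net of the closure is moved into [M] by replacing each centre
   that is close to [M] by a nearby point of [M]. *)
From Stdlib Require Import Reals List Lra Classical.
Open Scope R_scope.

Section TDefiner.

Variable star : R -> R -> R.
Hypothesis Hstar : t_definer star.

Lemma star_0l a : 0 <= a -> star 0 a = a.
Proof.
  destruct Hstar as [_ [Hcomm [_ [_ [Hunit _]]]]].
  intros Ha. rewrite Hcomm by lra. now apply Hunit.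
Qed.

Lemma star_lt_near_0 b r : 0 <= b -> b < r ->
  exists rho, rho > 0 /\ forall x, 0 <= x -> x < rho -> star x b < r.
Proof.
  destruct Hstar as [_ [_ [_ [_ [_ Hcont]]]]].
  intros Hb Hbr.
  destruct (Hcont b 0 Hb (Rle_refl 0) (r - b)) as [rho [Hrho Hnear]]; [lra|].
  exists rho. split; [exact Hrho|].
  intros x Hx Hxrho.
  assert (Hdist : Rabs (x - 0) < rho) by (rewrite Rminus_0_r, Rabs_pos_eq; lra).
  specialize (Hnear x Hx Hdist). rewrite star_0l in Hnear by exact Hb.
  apply Rabs_def2 in Hnear. lra.
Qed.

Lemma star_lt_small eps : eps > 0 -> exists delta, delta > 0 /\
  forall a b, 0 <= a -> a < delta -> 0 <= b -> b < delta -> star a b < eps.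
Proof.
  destruct Hstar as [_ [Hcomm [_ [Hmono _]]]].
  intros Heps.
  destruct (star_lt_near_0 (eps / 2) eps) as [rho [Hrho Hlt]]; [lra|lra|].
  exists (Rmin rho (eps / 2)). split; [apply Rmin_pos; lra|].
  intros a b Ha Hadelta Hb Hbdelta.
  pose proof (Rmin_l rho (eps / 2)). pose proof (Rmin_r rho (eps / 2)).
  assert (Hba : star b a <= star (eps / 2) a) by (apply Hmono; lra).
  rewrite (Hcomm b a), (Hcomm (eps / 2) a) in Hba by lra.
  specialize (Hlt a Ha ltac:(lra)). lra.
Qed.

End TDefiner.

Lemma exists_witnesses_in {X : Type} (P : X -> Prop) (rel : X -> X -> Prop)
  (L : list X) :
  exists G, (forall g, In g G -> P g) /\
    forall c, In c L -> (exists m, P m /\ rel c m) ->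
      exists g, In g G /\ rel c g.
Proof.
  induction L as [|c L [G [HGP HGrel]]].
  - exists nil. split; [intros g []|intros c []].
  - destruct (classic (exists m, P m /\ rel c m)) as [[m [Hm Hcm]]|Hnone].
    + exists (m :: G). split.
      * intros g [<-|Hg]; auto.
      * intros c' [<-|Hc'] Hex; [exists m; split; [left|]; auto|].
        destruct (HGrel c' Hc' Hex) as [g [Hg Hc'g]].
        exists g. split; [right|]; auto.
    + exists G. split; [exact HGP|].
      intros c' [<-|Hc'] Hex; [contradiction|auto].
Qed.

Section StarMetric.

Variables (X : Type) (star : R -> R -> R) (d : X -> X -> R).
Hypotheses (Hstar : t_definer star) (Hd : star_metric star d).

Lemma dist_refl x : d x x = 0.
Proof. destruct Hd as [_ [Hdeq _]]. now apply Hdeq. Qed.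

Lemma dist_lt_small eps : eps > 0 -> exists delta, delta > 0 /\
  forall x y z, d x z < delta -> d z y < delta -> d x y < eps.
Proof.
  destruct Hd as [Hd0 [_ [_ Htri]]].
  intros Heps.
  destruct (star_lt_small star Hstar eps Heps) as [delta [Hdelta Hsmall]].
  exists delta. split; [exact Hdelta|].
  intros x y z Hxz Hzy.
  pose proof (Htri x y z).
  pose proof (Hsmall _ _ (Hd0 x z) Hxz (Hd0 z y) Hzy). lra.
Qed.

Lemma ball_open y r : is_open d (ball d y r).
Proof.
  destruct Hstar as [_ [Hcomm _]].
  destruct Hd as [Hd0 [_ [_ Htri]]].
  intros z Hz. unfold ball in *.
  destruct (star_lt_near_0 star Hstar (d y z) r (Hd0 y z) Hz)
    as [rho [Hrho Hlt]].
  exists rho. split; [exact Hrho|].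
  intros w Hw.
  pose proof (Htri y w z) as Hywz.
  rewrite Hcomm in Hywz by apply Hd0.
  specialize (Hlt (d z w) (Hd0 z w) Hw). lra.
Qed.

Lemma subset_closure (M : X -> Prop) y : M y -> closure d M y.
Proof. intros Hy U _ HU. now exists y. Qed.

Lemma closure_dist_lt (M : X -> Prop) y r :
  closure d M y -> r > 0 -> exists m, M m /\ d m y < r.
Proof.
  destruct Hd as [_ [_ [Hsym _]]].
  intros Hy Hr.
  destruct (Hy (ball d y r) (ball_open y r)) as [m [Hym Hm]].
  - unfold ball. rewrite dist_refl. lra.
  - exists m. unfold ball in Hym. rewrite Hsym in Hym. auto.
Qed.

Lemma totally_bounded_sub_closure (M : X -> Prop) :
  totally_bounded_sub d M -> totally_bounded_sub d (closure d M).
Proof.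
  intros TB eps Heps.
  destruct (dist_lt_small eps Heps) as [delta [Hdelta Hsmall]].
  destruct (TB delta Hdelta) as [F [HFM HFnet]].
  exists F. split; [intros x Hx; apply subset_closure, HFM, Hx|].
  intros y Hy.
  destruct (closure_dist_lt M y delta Hy Hdelta) as [m [Hm Hmy]].
  destruct (HFnet m Hm) as [x [HxF Hxm]].
  exists x. split; [exact HxF|]. now apply Hsmall with m.
Qed.

Lemma totally_bounded_sub_subset (A B : X -> Prop) :
  (forall x, A x -> B x) ->
  totally_bounded_sub d B -> totally_bounded_sub d A.
Proof.
  destruct Hd as [_ [_ [Hsym _]]].
  intros HAB TB eps Heps.
  destruct (dist_lt_small eps Heps) as [delta [Hdelta Hsmall]].
  destruct (TB delta Hdelta) as [F [_ HFnet]].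
  destruct (exists_witnesses_in A (fun c m => d c m < delta) F)
    as [G [HGA HGnet]].
  exists G. split; [exact HGA|].
  intros y Hy.
  destruct (HFnet y (HAB y Hy)) as [c [HcF Hcy]].
  destruct (HGnet c HcF (ex_intro _ y (conj Hy Hcy))) as [g [HgG Hcg]].
  exists g. split; [exact HgG|].
  rewrite Hsym in Hcg. now apply Hsmall with c.
Qed.

End StarMetric.

Theorem theorem3p5 (X : Type) (star : R -> R -> R) (d : X -> X -> R)
  (Hstar : t_definer star) (Hd : star_metric star d)
  (M : X -> Prop) (HM : exists m, M m) :
  totally_bounded_sub d M <-> totally_bounded_sub d (closure d M).
Proof.
  split.
  - exact (totally_bounded_sub_closure X star d Hstar Hd M).
  - apply (totally_bounded_sub_subset X star d Hstar Hd).
    exact (subset_closure X d M).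
Qed.
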